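(* Let $P$ be a finite poset and $X:P\to\mathcal{P}_{<\infty}$ a diagram of finite posets. If $P$ has a maximum element $p$, then $\operatorname{\underline{hocolim}} X$ collapses to $X_p$ (viewed as a subposet of $\operatorname{\underline{hocolim}} X$). In particular, they are weak equivalent.
   Context: $P$ is viewed as a category with a unique arrow $p\to q$ iff $p\le q$; $\mathcal{P}_{<\infty}$ is the category of finite posets and order-preserving maps. Write $X_p=X(p)$, $f_{pq}=X(p\to q)$. $\operatorname{\underline{hocolim}} X$ is the poset on $\coprod_{p}X_p$ keeping the order within each $X_p$ and, for $x\in X_p$, $y\in X_q$, $p\le q$, setting $x\le y$ iff $f_{pq}(x)\le y$ in $X_q$. For $x$ in a finite poset $Y$: $\hat U_x=\{y<x\}$, $\hat F_x=\{y>x\}$. $x$ is an up beat point if $\hat F_x$ has a minimum, a down beat point if $\hat U_x$ has a maximum. A finite poset is contractible if it can be reduced to one point by removing beat points one at a time. $x$ is a down (resp. up) weak point if $\hat U_x$ (resp. $\hat F_x$) is contractible; removing a weak point is an elementary collapse, and $Y$ collapses to $Z$ if $Z$ is obtained from $Y$ by a sequence of elementary collapses. Two finite posets are weak equivalent if their order complexes are homotopy equivalent. *)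

From HB Require Import structures.
From mathcomp Require Import all_boot all_order all_algebra.
From mathcomp Require Import all_classical all_reals all_analysis.
Import Order.TTheory GRing.Theory Num.Theory.
Import numFieldNormedType.Exports.

Set Implicit Arguments.
Unset Strict Implicit.
Unset Printing Implicit Defensive.

Local Open Scope classical_set_scope.
Local Open Scope ring_scope.

(* Finite posets as subsets of a finite ambient type T carrying an order le.  *)
Section FinitePosetNotions.
Variables (T : finType) (le : rel T).

Definition ltp (x y : T) : bool := le x y && (x != y).

Definition Uhat (S : {set T}) (x : T) : {set T} := [set y in S | ltp y x].
Definition Fhat (S : {set T}) (x : T) : {set T} := [set y in S | ltp x y].

Definition has_max (A : {set T}) : Prop :=
  exists2 m, m \in A & forall y, y \in A -> le y m.
Definition has_min (A : {set T}) : Prop :=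
  exists2 m, m \in A & forall y, y \in A -> le m y.

Definition up_beat_point (S : {set T}) (x : T) : Prop :=
  x \in S /\ has_min (Fhat S x).
Definition down_beat_point (S : {set T}) (x : T) : Prop :=
  x \in S /\ has_max (Uhat S x).
Definition beat_point (S : {set T}) (x : T) : Prop :=
  up_beat_point S x \/ down_beat_point S x.

Inductive contractible : {set T} -> Prop :=
  | contractible_point (x : T) : contractible [set x]
  | contractible_step (S : {set T}) (x : T) :
      beat_point S x -> contractible (S :\ x) -> contractible S.

Definition down_weak_point (S : {set T}) (x : T) : Prop :=
  x \in S /\ contractible (Uhat S x).
Definition up_weak_point (S : {set T}) (x : T) : Prop :=
  x \in S /\ contractible (Fhat S x).
Definition weak_point (S : {set T}) (x : T) : Prop :=
  down_weak_point S x \/ up_weak_point S x.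

Inductive collapses : {set T} -> {set T} -> Prop :=
  | collapses_refl (S : {set T}) : collapses S S
  | collapses_step (S Z : {set T}) (x : T) :
      weak_point S x -> collapses (S :\ x) Z -> collapses S Z.

(* Geometric realization of the order complex of the subposet S, as a
   subspace of R^T (product = Euclidean topology): the convex combinations
   of points of S whose support is a chain. *)
Definition order_complex_realization (R : realType) (S : {set T})
  : set {ptws T -> R} :=
  [set f | (forall x, 0 <= f x) /\ (\sum_(x : T) f x = 1) /\
           (forall x, f x != 0 -> x \in S) /\
           (forall x y, f x != 0 -> f y != 0 -> le x y || le y x)].

End FinitePosetNotions.

Arguments order_complex_realization {T} le R S.

Definition homotopic_on (R : realType) (U V : topologicalType)
  (A : set U) (B : set V) (f g : U -> V) : Prop :=
  exists H : R * U -> V,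
    {within `[0, 1] `*` A, continuous H} /\
    (forall t a, t \in `[0, 1] -> A a -> B (H (t, a))) /\
    (forall a, A a -> H (0, a) = f a) /\
    (forall a, A a -> H (1, a) = g a).

Definition homotopy_equivalent (R : realType) (U V : topologicalType)
  (A : set U) (B : set V) : Prop :=
  exists (f : U -> V) (g : V -> U),
    {within A, continuous f} /\ (forall a, A a -> B (f a)) /\
    {within B, continuous g} /\ (forall b, B b -> A (g b)) /\
    homotopic_on R A A (g \o f) id /\ homotopic_on R B B (f \o g) id.

Arguments homotopic_on R {U V} A B f g.
Arguments homotopy_equivalent R {U V} A B.

Definition weak_equivalent (T1 T2 : finType) (le1 : rel T1) (le2 : rel T2)
  (S1 : {set T1}) (S2 : {set T2}) : Prop :=
  forall R : realType,
    homotopy_equivalent R (order_complex_realization le1 R S1)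
                          (order_complex_realization le2 R S2).

(* dmap p q is f_pq; it is only meaningful (and constrained) when p <= q.    *)
Unset Implicit Arguments.
Record diagram (d : Order.disp_t) (P : finPOrderType d) := Diagram {
  dobj : P -> finType;
  dle : forall p : P, rel (dobj p);
  dmap : forall p q : P, dobj p -> dobj q;
  dle_refl : forall p, reflexive (dle p);
  dle_anti : forall p, antisymmetric (dle p);
  dle_trans : forall p, transitive (dle p);
  dmap_mono : forall p q : P, (p <= q)%O ->
    forall x y, dle p x y -> dle q (dmap p q x) (dmap p q y);
  dmap_id : forall (p : P) (x : dobj p), dmap p p x = x;
  dmap_comp : forall p q r : P, (p <= q)%O -> (q <= r)%O ->
    forall x : dobj p, dmap q r (dmap p q x) = dmap p r x
}.
Set Implicit Arguments.
Arguments diagram {d} P.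
Arguments Diagram {d P}.
Arguments dobj {d P} _ _.
Arguments dle {d P} _ _.
Arguments dmap {d P} _ _ _.

Section Hocolim.
Variables (d : Order.disp_t) (P : finPOrderType d) (X : diagram P).

Definition hocolim_carrier : finType := {p : P & dobj X p}.

Definition hocolim_le : rel hocolim_carrier :=
  fun x y => (tag x <= tag y)%O &&
             dle X (tag y) (dmap X (tag x) (tag y) (tagged x)) (tagged y).

Definition fiber (p : P) : {set hocolim_carrier} := [set x | tag x == p].

End Hocolim.

Arguments hocolim_carrier {d P} X.
Arguments hocolim_le {d P} X.
Arguments fiber {d P} X p.

(* The map [r] sending [x] in [X_q] to [f_qp x] in [X_p] retracts hocolim X
   onto X_p, with [x <= r x] and [r x] the least element of X_p above [x].
   Removing a maximal point [x] outside X_p is therefore an elementary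
   collapse: everything above [x] lies in X_p, so the upper link of [x] has
   the minimum [r x] and is contractible.  On order complexes, pushing
   weights forward along [r] is a retraction onto the complex of X_p, and its
   composite with the inclusion is homotopic to the identity by transferring
   the weight of each [x] to [r x] progressively, from the top of each chain
   down, so that the support always remains a chain. *)

From HB Require Import structures.
From mathcomp Require Import all_boot all_order all_algebra.
From mathcomp Require Import all_classical all_reals all_analysis.
Import Order.TTheory GRing.Theory Num.Theory.
Import numFieldNormedType.Exports.

Set Implicit Arguments.
Unset Strict Implicit.
Unset Printing Implicit Defensive.

Local Open Scope ring_scope.

Section PartialOrder.
Variables (T : finType) (le : rel T).
Hypotheses (le_refl : reflexive le) (le_anti : antisymmetric le)
  (le_trans : transitive le).

Lemma ltpW x y : ltp le x y -> le x y.
Proof. by case/andP. Qed.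

Lemma ltp_trans x y z : ltp le x y -> ltp le y z -> ltp le x z.
Proof.
rewrite /ltp => /andP[lxy nxy] /andP[lyz nyz]; rewrite (le_trans lxy lyz) /=.
by apply: contraNneq nxy => exz; subst z; apply/eqP/le_anti; rewrite lxy lyz.
Qed.

(* A point with the largest number of predecessors in [A] is maximal in [A]. *)
Lemma exists_maximal (A : {set T}) x0 : x0 \in A ->
  exists2 x, x \in A & forall y, y \in A -> ~~ ltp le x y.
Proof.
move=> Ax0.
have [x Ax xmax] := arg_maxnP (fun x => #|[set y in A | le y x]|) Ax0.
exists x => // y Ay; apply/negP => /andP[lxy nxy].
have /proper_card : [set z in A | le z x] \proper [set z in A | le z y].
  apply/properP; split.
    by apply/fintype.subsetP => z; rewrite !inE => /andP[-> /le_trans]; apply.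
  exists y; first by rewrite inE Ay le_refl.
  by rewrite inE Ay /=; apply: contra nxy => lyx; rewrite (@le_anti x y) ?lxy.
by apply/negP; rewrite -leqNgt; exact: xmax.
Qed.

End PartialOrder.

Lemma exists_minimal (T : finType) (le : rel T) :
  reflexive le -> antisymmetric le -> transitive le ->
  forall (A : {set T}) x0, x0 \in A ->
  exists2 x, x \in A & forall y, y \in A -> ~~ ltp le y x.
Proof.
move=> le_refl le_anti le_trans A x0 Ax0.
have ge_refl : reflexive (fun x y => le y x) by move=> x; exact: le_refl.
have ge_anti : antisymmetric (fun x y => le y x).
  by move=> x y /andP[lyx lxy]; apply: le_anti; rewrite lxy lyx.
have ge_trans : transitive (fun x y => le y x).
  by move=> x y z lyx lzy; exact: le_trans lzy lyx.
have [x Ax xmin] := exists_maximal ge_refl ge_anti ge_trans Ax0.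
by exists x => // y /xmin; rewrite /ltp eq_sym.
Qed.

Section Collapse.
Variables (T : finType) (le : rel T).
Hypotheses (le_refl : reflexive le) (le_anti : antisymmetric le)
  (le_trans : transitive le).

(* A minimal element other than the least one is a down beat point. *)
Lemma contractible_of_least (S : {set T}) m :
  m \in S -> (forall y, y \in S -> le m y) -> contractible le S.
Proof.
have [n] := ubnP #|S|; elim: n S => // n IH S cardS mS leastS.
have [Sm0 | /set0Pn[y0 y0Sm]] := eqVneq (S :\ m) finset.set0.
  suff -> : S = [set m] by exact: contractible_point.
  apply/setP => z; rewrite inE; apply/idP/eqP => [zS | -> //].
  by apply/eqP; apply: contraT => zm; rewrite -(finset.in_set0 z) -Sm0 !inE zm.
have [y ySm ymin] := exists_minimal le_refl le_anti le_trans y0Sm.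
move: (ySm); rewrite !inE => /andP[ym yS].
apply: (@contractible_step _ _ S y).
  right; split=> //; exists m; first by rewrite !inE mS /ltp leastS // eq_sym.
  move=> z; rewrite !inE => /andP[zS lzy]; have [-> // | zm] := eqVneq z m.
  by have := ymin z; rewrite !inE zm zS lzy => /(_ isT).
apply: IH => [|| z].
- by move: cardS; rewrite (cardsD1 y) yS.
- by rewrite !inE mS eq_sym ym.
- by rewrite !inE => /andP[_ /leastS].
Qed.

Variables (F : {set T}) (r : T -> T).
Hypotheses (r_in : forall x, r x \in F) (le_r : forall x, le x (r x))
  (r_least : forall x y, y \in F -> le x y -> le (r x) y).

Lemma closure_id x : x \in F -> r x = x.
Proof. by move=> xF; apply: le_anti; rewrite r_least ?le_r. Qed.

Lemma closure_mono x y : le x y -> le (r x) (r y).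
Proof. by move=> lxy; apply: r_least => //; exact: le_trans lxy (le_r y). Qed.

(* Everything strictly above [x] lies in [F], where [r x] is the least
   element above [x]. *)
Lemma maximal_up_weak_point (S : {set T}) x : F \subset S ->
  x \in S :\: F -> (forall y, y \in S :\: F -> ~~ ltp le x y) ->
  up_weak_point le S x.
Proof.
move=> FS; rewrite inE => /andP[xF xS] xmax; split=> //.
apply: (@contractible_of_least _ (r x)) => [|y].
  rewrite !inE (fintype.subsetP FS _ (r_in x)) /ltp le_r /=.
  by apply: contraNneq xF => ->.
rewrite !inE => /andP[yS lxy]; apply: r_least (ltpW lxy).
by apply: contraT => yF; have := xmax y; rewrite !inE yF yS lxy => /(_ isT).
Qed.

Lemma collapses_to_closure (S : {set T}) : F \subset S -> collapses le S F.
Proof.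
have [n] := ubnP #|S|; elim: n S => // n IH S cardS FS.
have [SF | /fintype.subsetPn[x0 x0S x0F]] := boolP (S \subset F).
  have -> : F = S by apply/eqP; rewrite finset.eqEsubset FS SF.
  exact: collapses_refl.
have x0SF : x0 \in S :\: F by rewrite inE x0F.
have [x xSF xmax] := exists_maximal le_refl le_anti le_trans x0SF.
apply: (@collapses_step _ _ S F x).
  by right; exact: maximal_up_weak_point.
apply: IH; first by move: xSF cardS; rewrite inE (cardsD1 x) => /andP[_ ->].
apply/fintype.subsetP => z zF; rewrite !inE (fintype.subsetP FS _ zF) andbT.
by apply: contraTneq zF => ->; move: xSF; rewrite inE => /andP[].
Qed.
End Collapse.

Lemma sum_neq0_exists (R : numDomainType) (T : finType) (P : pred T)
    (g : T -> R) :
  \sum_(x | P x) g x != 0 -> exists2 x, P x & g x != 0.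
Proof.
apply: contraNP => noP; rewrite big1 // => x Px.
by apply/eqP/negPn/negP => gx; apply: noP; exists x.
Qed.

Section Realization.
Variables (R : realType) (T : finType) (le : rel T).
Hypotheses (le_refl : reflexive le) (le_anti : antisymmetric le)
  (le_trans : transitive le).
Variables (F : {set T}) (r : T -> T).
Hypotheses (r_in : forall x, r x \in F) (le_r : forall x, le x (r x))
  (r_mono : forall x y, le x y -> le (r x) (r y))
  (r_id : forall x, x \in F -> r x = x).

Local Notation realization S := (order_complex_realization le R S).

Lemma realizationP S f :
  realization S f <-> [/\ forall x, 0 <= f x, \sum_x f x = 1,
    forall x, f x != 0 -> x \in S &
    forall x y, f x != 0 -> f y != 0 -> le x y || le y x].
Proof. by split=> [[? [? [? ?]]] | []]. Qed.

Lemma realization_subset (S1 S2 : {set T}) f :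
  S1 \subset S2 -> realization S1 f -> realization S2 f.
Proof.
move=> /fintype.subsetP S12 /realizationP[f_ge0 f_sum1 f_supp f_chain].
by apply/realizationP; split=> // x /f_supp /S12.
Qed.

Definition pushforward (f : {ptws T -> R}) : {ptws T -> R} :=
  fun y => \sum_(x | r x == y) f x.

Lemma sum_pushforward f : \sum_y pushforward f y = \sum_x f x.
Proof. by rewrite [RHS](partition_big r xpredT). Qed.

Lemma pushforward_realization S f :
  realization S f -> realization F (pushforward f).
Proof.
case/realizationP => f_ge0 f_sum1 _ f_chain; apply/realizationP; split.
- by move=> y; apply: sumr_ge0.
- by rewrite sum_pushforward.
- by move=> y /sum_neq0_exists[x /eqP <- _].
- move=> _ _ /sum_neq0_exists[x1 /eqP <- f1] /sum_neq0_exists[x2 /eqP <- f2].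
  by case/orP: (f_chain _ _ f1 f2) => /r_mono ->; rewrite ?orbT.
Qed.

Lemma pushforward_id f : realization F f -> pushforward f = f.
Proof.
case/realizationP => _ _ f_supp _; apply/funext => y.
rewrite /pushforward; have [yF | yNF] := boolP (y \in F).
  rewrite (bigD1 y) ?r_id //= big1 ?addr0 // => x /andP[/eqP rxy xy].
  apply/eqP; apply: contraTT xy => /f_supp xF.
  by rewrite -rxy r_id ?eqxx.
have -> : f y = 0 by apply/eqP; apply: contraNT yNF => /f_supp.
by rewrite big1 // => x /eqP rxy; move: yNF; rewrite -rxy r_in.
Qed.

Definition mass_above (f : T -> R) x := \sum_(y | ltp le x y) f y.

(* Stacking the masses of a chain from the top down, [x] occupies the depths
   from [mass_above f x] to [mass_above f x + f x]; this is the part of it at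
   depth at most [s]. *)
Definition moved_mass (s : R) (f : T -> R) x :=
  Num.min (Num.max (s - mass_above f x) 0) (f x).

(* At time [t], the mass at depth at most [1 - t] is moved from each [x] to
   [r x].  Moving a uniform fraction instead would fail: [y] and [r x] need not
   be comparable for [x <= y]. *)
Definition retraction_homotopy (z : R * {ptws T -> R}) : {ptws T -> R} :=
  fun y => z.2 y - moved_mass (1 - z.1) z.2 y
           + pushforward (moved_mass (1 - z.1) z.2) y.

Section Masses.
Variable f : T -> R.
Hypothesis f_ge0 : forall x, 0 <= f x.

Lemma mass_above_ge0 x : 0 <= mass_above f x.
Proof. exact: sumr_ge0. Qed.

Lemma mass_above_ltp x y :
  ltp le x y -> mass_above f y + f y <= mass_above f x.
Proof.
move=> lxy; rewrite /mass_above [leRHS](bigD1 y) //= addrC lerD2r.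
rewrite [leLHS]big_mkcond [leRHS]big_mkcond /=; apply: ler_sum => z _.
case: ifPn => [lyz | _]; last by case: ifP.
rewrite (ltp_trans le_anti le_trans lxy lyz) /=.
by case: eqVneq lyz => [-> | //]; rewrite /ltp eqxx andbF.
Qed.

Lemma mass_above_le1 x : \sum_y f y = 1 -> mass_above f x + f x <= 1.
Proof.
move=> <-; rewrite [leRHS](bigD1 x) //= addrC lerD2r /mass_above.
rewrite [leLHS]big_mkcond [leRHS]big_mkcond /=; apply: ler_sum => z _.
case: ifPn => [lxz | _]; last by case: ifP.
by case: eqVneq lxz => [-> | //]; rewrite /ltp eqxx andbF.
Qed.

Lemma moved_mass_ge0 s x : 0 <= moved_mass s f x.
Proof. by rewrite /moved_mass le_min le_max lexx orbT f_ge0. Qed.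

Lemma moved_mass_le s x : moved_mass s f x <= f x.
Proof. by rewrite /moved_mass ge_min lexx orbT. Qed.

Lemma moved_mass_neq0 s x :
  moved_mass s f x != 0 -> (f x != 0) && (mass_above f x < s).
Proof.
rewrite neq_lt ltNge moved_mass_ge0 /= lt_min lt_max ltxx orbF subr_gt0.
by case/andP=> -> /gt_eqF ->.
Qed.

Lemma kept_mass_neq0 s x :
  f x - moved_mass s f x != 0 -> (f x != 0) && (s < mass_above f x + f x).
Proof.
rewrite subr_eq0 => kept; have lt_moved : moved_mass s f x < f x.
  by rewrite lt_neqAle eq_sym kept moved_mass_le.
apply/andP; split.
  by apply: contraTneq lt_moved => ->; rewrite -leNgt moved_mass_ge0.
move: lt_moved; rewrite /moved_mass gt_min ltxx orbF gt_max => /andP[+ _].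
by rewrite ltrBlDl addrC.
Qed.

(* Kept mass lies deeper than [s] and moved mass shallower, so along a chain
   every point keeping mass lies below every point giving some away. *)
Lemma kept_below_moved s x y :
  (forall x y, f x != 0 -> f y != 0 -> le x y || le y x) ->
  f y - moved_mass s f y != 0 -> moved_mass s f x != 0 -> le y x.
Proof.
move=> f_chain /kept_mass_neq0/andP[fy sy] /moved_mass_neq0/andP[fx ax].
case/orP: (f_chain _ _ fx fy) => // lxy; have [-> // | nxy] := eqVneq x y.
have := lt_le_trans (lt_trans ax sy) (mass_above_ltp (x:=x) (y:=y) _).
by rewrite ltxx /ltp lxy nxy => /(_ isT).
Qed.

Lemma moved_mass1 x : \sum_y f y = 1 -> moved_mass 1 f x = f x.
Proof.
move=> f_sum1; rewrite /moved_mass min_r // le_max lerBrDl.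
by rewrite mass_above_le1.
Qed.

Lemma moved_mass0 x : moved_mass 0 f x = 0.
Proof.
by rewrite /moved_mass sub0r max_r ?min_l // oppr_le0 mass_above_ge0.
Qed.

End Masses.

Lemma retraction_homotopy_neq0 t f y : retraction_homotopy (t, f) y != 0 ->
  f y - moved_mass (1 - t) f y != 0 \/
  exists2 x, r x = y & moved_mass (1 - t) f x != 0.
Proof.
rewrite /retraction_homotopy /=.
have [-> | ] := eqVneq (f y - moved_mass (1 - t) f y) 0; last by left.
by rewrite add0r => /sum_neq0_exists[x /eqP rx mx]; right; exists x.
Qed.

Lemma retraction_homotopy_realization t f :
  realization [set: T] f -> realization [set: T] (retraction_homotopy (t, f)).
Proof.
case/realizationP => f_ge0 f_sum1 _ f_chain; apply/realizationP; split=> //.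
- move=> y; apply: addr_ge0; first by rewrite subr_ge0 moved_mass_le.
  by apply: sumr_ge0 => x _; exact: moved_mass_ge0.
- by rewrite /retraction_homotopy big_split /= sum_pushforward sumrB subrK.
move=> y1 y2 /retraction_homotopy_neq0[k1 | [x1 <- m1]]
               /retraction_homotopy_neq0[k2 | [x2 <- m2]].
- have /andP[f1 _] := kept_mass_neq0 f_ge0 k1.
  have /andP[f2 _] := kept_mass_neq0 f_ge0 k2.
  exact: f_chain.
- by rewrite (le_trans (kept_below_moved f_ge0 f_chain k1 m2) (le_r x2)).
- by rewrite (le_trans (kept_below_moved f_ge0 f_chain k2 m1) (le_r x1)) orbT.
- have /andP[f1 _] := moved_mass_neq0 f_ge0 m1.
  have /andP[f2 _] := moved_mass_neq0 f_ge0 m2.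
  by case/orP: (f_chain _ _ f1 f2) => /r_mono ->; rewrite ?orbT.
Qed.

Lemma retraction_homotopy0 f :
  realization [set: T] f -> retraction_homotopy (0, f) = pushforward f.
Proof.
case/realizationP => f_ge0 f_sum1 _ _; apply/funext => y.
rewrite /retraction_homotopy /= subr0 moved_mass1 // subrr add0r.
by apply: eq_bigr => x _; rewrite moved_mass1.
Qed.

Lemma retraction_homotopy1 f :
  (forall x, 0 <= f x) -> retraction_homotopy (1, f) = f.
Proof.
move=> f_ge0; apply/funext => y.
rewrite /retraction_homotopy /= subrr moved_mass0 // subr0.
by rewrite /pushforward big1 ?addr0 // => x _; exact: moved_mass0.
Qed.

Section Continuity.
Local Open Scope classical_set_scope.

Lemma continuous_ptws (Y : topologicalType) (h : Y -> {ptws T -> R}) :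
  (forall i, continuous (fun y => h y i)) -> continuous h.
Proof.
move=> h_cont y; apply/cvg_sup => i; apply/cvg_image.
  by rewrite eqEsubset; split=> v // _; exists (fun _ => v).
move=> B /= nB; exists ((fun g : T -> R => g i) @^-1` B); first exact: h_cont.
by rewrite eqEsubset; split=> [v [g Bg <-] | v Bv] //; exists (fun _ => v).
Qed.

Lemma continuous_sum (Y : topologicalType) (P : pred T) (g : T -> Y -> R^o) :
  (forall x, continuous (g x)) -> continuous (fun y => \sum_(x | P x) g x y).
Proof.
by move=> g_cont; apply: continuous_big => //; exact: add_continuous.
Qed.

Lemma continuous_coord (i : T) :
  continuous (fun z : R * {ptws T -> R} => z.2 i).
Proof.
move=> z; apply: (@continuous_comp _ {ptws T -> R} R^o snd (fun f => f i)).
  exact: cvg_snd.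
exact: (@proj_continuous T (fun _ => R^o) i).
Qed.

Lemma continuous_moved_mass x :
  continuous (fun z : R * {ptws T -> R} => moved_mass (1 - z.1) z.2 x).
Proof.
pose level (z : R * {ptws T -> R}) := 1 - z.1 - mass_above z.2 x.
have level_cont : continuous level.
  move=> z; apply: (@continuousB _ _ _ (fun z : R * {ptws T -> R} => 1 - z.1)).
    apply: (@continuousB _ _ _ (fun=> 1 : R) fst); first exact: cst_continuous.
    exact: cvg_fst.
  by apply: continuous_sum => y; exact: continuous_coord.
move=> z.
apply: (@continuous_min _ _ (fun z => Num.max (level z) 0) (fun z => z.2 x)).
  apply: (@continuous_max _ _ level (fun=> 0 : R)); first exact: level_cont.
  exact: cst_continuous.
exact: continuous_coord.
Qed.

Lemma continuous_retraction_homotopy : continuous retraction_homotopy.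
Proof.
apply: continuous_ptws => y z.
pose moved (z : R * {ptws T -> R}) := moved_mass (1 - z.1) z.2.
apply: (@continuousD _ _ _ (fun z : R * {ptws T -> R} => z.2 y - moved z y)
                          (fun z => pushforward (moved z) y)).
  apply: (@continuousB _ _ _ (fun z : R * {ptws T -> R} => z.2 y) (moved^~ y)).
    exact: continuous_coord.
  exact: continuous_moved_mass.
by apply: continuous_sum => x; exact: continuous_moved_mass.
Qed.

Lemma continuous_pushforward : continuous pushforward.
Proof.
apply: continuous_ptws => y; apply: continuous_sum => x.
exact: (@proj_continuous T (fun _ => R^o) x).
Qed.

End Continuity.
End Realization.

Section ClosureWeakEquivalence.
Variables (T : finType) (le : rel T) (F : {set T}) (r : T -> T).
Hypotheses (le_refl : reflexive le) (le_anti : antisymmetric le)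
  (le_trans : transitive le).
Hypotheses (r_in : forall x, r x \in F) (le_r : forall x, le x (r x))
  (r_least : forall x y, y \in F -> le x y -> le (r x) y).

Lemma weak_equivalent_closure : weak_equivalent le le [set: T] F.
Proof.
have r_mono := closure_mono le_trans r_in le_r r_least.
have r_id := closure_id le_refl le_anti le_r r_least.
move=> R; exists (@pushforward R T r), id.
split; [|split; [|split; [|split; [|split]]]].
- exact/continuous_subspaceT/continuous_pushforward.
- by move=> f; exact: pushforward_realization.
- by apply: continuous_subspaceT => f; exact: cvg_id.
- by move=> f; apply: realization_subset; exact: finset.subsetT.
- exists (@retraction_homotopy R T le r); split; [|split; [|split]].
  + exact/continuous_subspaceT/continuous_retraction_homotopy.
  + by move=> t f _; exact: retraction_homotopy_realization.
  + by move=> f rl_f; rewrite retraction_homotopy0.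
  + by move=> f /realizationP[f_ge0 _ _ _]; rewrite retraction_homotopy1.
- exists snd; split; [|split; [|split]] => //.
  + by apply: continuous_subspaceT => z; exact: cvg_snd.
  + by move=> f rl_f /=; rewrite (pushforward_id r_in r_id rl_f).
Qed.

End ClosureWeakEquivalence.

Section HomotopyColimit.
Variables (d : Order.disp_t) (P : finPOrderType d) (X : diagram P).

Local Notation hle := (hocolim_le X).

Lemma hocolim_le_refl : reflexive hle.
Proof. by case=> q a; rewrite /hocolim_le /= lexx dmap_id dle_refl. Qed.

Lemma hocolim_le_anti : antisymmetric hle.
Proof.
case=> q a [q' b]; rewrite /hocolim_le /=.
case/andP=> /andP[lqq' lab] /andP[lq'q lba].
have eqq' : q = q' by apply/le_anti; rewrite lqq' lq'q.
subst q'; rewrite !dmap_id in lab lba.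
by rewrite (dle_anti _ _ _ _ a b) ?lab ?lba.
Qed.

Lemma hocolim_le_trans : transitive hle.
Proof.
case=> qy b [qx a] [qz c]; rewrite /hocolim_le /=.
move=> /andP[lxy dxy] /andP[lyz dyz].
rewrite (le_trans lxy lyz) /= -(dmap_comp _ _ _ _ _ _ lxy lyz).
exact: dle_trans _ _ _ _ _ _ _ (dmap_mono _ _ _ _ _ lyz _ _ dxy) dyz.
Qed.

Variables (p : P) (p_max : forall q : P, (q <= p)%O).

Definition to_top (x : hocolim_carrier X) : hocolim_carrier X :=
  existT _ p (dmap X (tag x) p (tagged x)).

Lemma to_top_in_fiber x : to_top x \in fiber X p.
Proof. by rewrite inE /= eqxx. Qed.

Lemma le_to_top x : hle x (to_top x).
Proof. by case: x => q a; rewrite /hocolim_le /= p_max dle_refl. Qed.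

Lemma to_top_least x y : y \in fiber X p -> hle x y -> hle (to_top x) y.
Proof.
case: x => qx a; case: y => qy b; rewrite inE /= => /eqP eqp; subst qy.
by rewrite /hocolim_le /= => /andP[_ dab]; rewrite lexx dmap_id.
Qed.

End HomotopyColimit.

Theorem corollary2p5 (d : Order.disp_t) (P : finPOrderType d)
  (X : diagram P) (p : P) (p_max : forall q : P, (q <= p)%O) :
  collapses (hocolim_le X) [set: hocolim_carrier X] (fiber X p) /\
  weak_equivalent (hocolim_le X) (hocolim_le X)
    [set: hocolim_carrier X] (fiber X p).
Proof.
have refl := @hocolim_le_refl _ _ X.
have anti := @hocolim_le_anti _ _ X.
have trans := @hocolim_le_trans _ _ X.
have top_in := @to_top_in_fiber _ _ X p.
have le_top := @le_to_top _ _ X p p_max.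
have top_least := @to_top_least _ _ X p.
split.
  apply: (collapses_to_closure refl anti trans top_in le_top top_least).
  exact: finset.subsetT.
exact: weak_equivalent_closure refl anti trans top_in le_top top_least.
Qed.
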